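(* Let $E\subseteq E'\subseteq\binom{[n]}{2}$ and $K\in\mathbb{N}^{E'}$. If there exists $F\in W^K_{E,|E'|}$ with $\langle F,Q_{E'}\rangle\neq0$, then there exists $F'\in W^K_{E,|E|}$ with $\langle F',Q_E\rangle\neq0$.
   Context: $[n]=\{1,\dots,n\}$ and $\binom{[n]}{2}$ is the set of $2$-subsets of $[n]$. For a finite set $S$, $\mathbb{N}^S$ is the set of maps $S\to\mathbb{N}$, $\mathbb{N}^S_m=\{K\in\mathbb{N}^S:\sum_sK(s)=m\}$, $K!=\prod_sK(s)!$, and $K'\le K$ means pointwise inequality (maps on $E$ are compared with maps on $E'$ by extending by $0$). In $\mathbb{C}[x_1,\dots,x_n]$ define, for a set $E$ of $2$-subsets, $Q_E=\prod_{\{i,j\}\in E,\ i<j}(x_i-x_j)$ and for $K\in\mathbb{N}^E$, $H_E^K=\prod_{\{i,j\}\in E,\ i<j}(x_i+x_j)^{K(\{i,j\})}$. For $K\in\mathbb{N}^{E'}$ and $m\in\mathbb{N}$, $W^K_{E,m}$ is the complex linear span of $\{H_E^{K'}:K'\in\mathbb{N}^E_m,\ K'\le K\}$. On homogeneous polynomials of degree $m$ define $\langle f,g\rangle=\sum_{K\in\mathbb{N}^n_m}K!\,\mathrm{coe}(x^K,f)\overline{\mathrm{coe}(x^K,g)}$, where $x^K=\prod_ix_i^{K(i)}$ and $\mathrm{coe}(x^K,f)$ is the coefficient of $x^K$ in $f$. *)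

From HB Require Import structures.
From mathcomp Require Import all_boot all_order all_algebra.
From mathcomp Require Import mpoly.
Set Implicit Arguments. Unset Strict Implicit. Unset Printing Implicit Defensive.
Import Order.TTheory GRing.Theory Num.Theory.
Local Open Scope ring_scope.

(* Variables x_1..x_n are 'X_i for i : 'I_n (0-based).  A 2-subset {i,j} with
   i < j of [n] is encoded by the ordered pair (i, j) : 'I_n * 'I_n with i < j;
   a set E of 2-subsets is a {set 'I_n * 'I_n} all of whose elements satisfy
   p.1 < p.2. *)

Definition two_subsets (n : nat) (E : {set 'I_n * 'I_n}) : bool :=
  [forall p in E, (p.1 < p.2)%N].

Definition QE (C : numClosedFieldType) (n : nat) (E : {set 'I_n * 'I_n})
  : {mpoly C[n]} :=
  \prod_(p in E) ('X_p.1 - 'X_p.2).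

Definition HE (C : numClosedFieldType) (n : nat) (E : {set 'I_n * 'I_n})
  (K : 'I_n * 'I_n -> nat) : {mpoly C[n]} :=
  \prod_(p in E) ('X_p.1 + 'X_p.2) ^+ K p.

(* K' in N^E_m with K' <= K (only values on E are relevant). *)
Definition admissible (n : nat) (E : {set 'I_n * 'I_n}) (K : 'I_n * 'I_n -> nat)
  (m : nat) (K' : 'I_n * 'I_n -> nat) : Prop :=
  (\sum_(p in E) K' p)%N = m /\ (forall p, p \in E -> K' p <= K p)%N.

Definition inW (C : numClosedFieldType) (n : nat) (K : 'I_n * 'I_n -> nat)
  (E : {set 'I_n * 'I_n}) (m : nat) (F : {mpoly C[n]}) : Prop :=
  exists (N : nat) (c : 'I_N -> C) (k : 'I_N -> ('I_n * 'I_n -> nat)),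
    (forall t, admissible E K m (k t)) /\
    F = \sum_(t < N) c t *: HE C E (k t).

Definition inner (C : numClosedFieldType) (n m : nat) (f g : {mpoly C[n]}) : C :=
  \sum_(k : 'X_{1..n < m.+1} | mdeg k == m)
     (\prod_(i < n) (k i)`!)%:R * f@_k * (g@_k)^*.

From HB Require Import structures.
From mathcomp Require Import all_boot all_order all_algebra.
From mathcomp Require Import mpoly.
From mathcomp Require Import ring.
Import Order.TTheory GRing.Theory Num.Theory.
Local Open Scope ring_scope.
Set Implicit Arguments. Unset Strict Implicit.

(* Since E is contained in E', Q_{E'} = Q_E * prod_{(i,j) in E'\E}
   (x_i - x_j), and the proof peels these |E'| - |E| linear factors off one at
   a time, using two facts about the inner product <.,.> and the spaces W:
   (1) Adjunction: multiplication by x_a and the derivative d/dx_a are adjoint,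
       up to a shift of degree: <F, G x_a>_{k+1} = <dF/dx_a, G>_k.  Hence
       <F, G (x_a - x_b)>_{k+1} = <dF/dx_a - dF/dx_b, G>_k.
   (2) Stability: d/dx_a maps W^K_{E,m+1} into W^K_{E,m}, because by the
       product rule dH_E^{K'}/dx_a is a combination of the H_E^{K''} where K''
       is K' with one positive entry decreased by one.
   Each peeling step therefore replaces F by dF/dx_a - dF/dx_b, keeps it in W
   (with the degree lowered by one) and leaves the inner product unchanged;
   after all steps we reach F' in W^K_{E,|E|} with <F', Q_E> = <F, Q_{E'}>. *)

Section Fischer.

Variables (C : numClosedFieldType) (n : nat).
Implicit Types (F G : {mpoly C[n]}) (a b : 'I_n).

Lemma prod_fact_addU (j : 'X_{1..n}) a :
  (\prod_(i < n) ((j + U_(a))%MM i)`!)%N = ((j a).+1 * \prod_(i < n) (j i)`!)%N.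
Proof.
rewrite (bigD1 a) //= [in RHS](bigD1 a) //= mnmDE mnm1E eqxx addn1 factS mulnA.
congr (_ * _)%N; apply: eq_bigr => i /negbTE ia.
by rewrite mnmDE mnm1E eq_sym ia addn0.
Qed.

Lemma mcoeff_mulX_eq0 G a (k : 'X_{1..n}) : k a = 0%N -> (G * 'X_a)@_k = 0.
Proof.
move=> ka0; apply: memN_msupp_eq0; apply/negP.
rewrite (perm_mem (msuppMX G U_(a))) => /mapP [m' _ Em].
by move: ka0; rewrite Em mnmDE mnm1E eqxx.
Qed.

(* Fact (1): multiplication by x_a is adjoint to d/dx_a.  The sum defining the
   left side is reindexed along m = j + e_a, the terms with m a = 0 vanishing. *)
Lemma inner_mulX k F G a : inner k.+1 F (G * 'X_a) = inner k (F^`M(a)) G.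
Proof.
rewrite /inner (bigID (fun m : 'X_{1..n < k.+2} => (0 < m a)%N)) /=.
rewrite [X in _ + X]big1 ?addr0; last first.
  move=> m /andP[_]; rewrite lt0n negbK => /eqP ma0.
  by rewrite mcoeff_mulX_eq0 // rmorph0 mulr0.
have shift_bounded (j : 'X_{1..n < k.+1}) : (mdeg (j + U_(a))%MM < k.+2)%N.
  by rewrite mdegD mdeg1 addn1 ltnS bmdeg.
pose up (j : 'X_{1..n < k.+1}) : 'X_{1..n < k.+2} := BMultinom (shift_bounded j).
pose down (m : 'X_{1..n < k.+2}) : 'X_{1..n < k.+1} := insubd bm0 (m - U_(a))%MM.
have U_le (m : 'X_{1..n}) : (0 < m a)%N -> (U_(a) <= m)%MM.
  move=> ma; apply/mnm_lepP => i; rewrite mnm1E.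
  by case: eqP => [<-|].
have downK j : down (up j) = j.
  apply: val_inj; rewrite /down /up /= insubdK /=; first by rewrite addmK.
  by rewrite unfold_in /= addmK bmdeg.
rewrite (reindex_onto up down) /=; last first.
  move=> m /andP[/eqP dm ma]; apply: val_inj => /=.
  rewrite /down insubdK ?submK ?U_le //.
  have e : mdeg (bmnm m) = (mdeg (bmnm m - U_(a))%MM + 1)%N.
    by rewrite -{1}(submK (U_le _ ma)) mdegD mdeg1.
  by rewrite unfold_in /= -(ltn_add2r 1) -e dm addn1.
apply: eq_big => j.
  by rewrite downK eqxx andbT /= mnmDE mnm1E eqxx addn1 /= andbT mdegD mdeg1 addn1.
move=> _ /=.
rewrite prod_fact_addU mcoeff_deriv addmC mcoeffMX addmC natrM mulrnAr; ring.
Qed.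

Lemma inner_subl k F1 F2 G : inner k (F1 - F2) G = inner k F1 G - inner k F2 G.
Proof. by rewrite /inner -sumrB; apply: eq_bigr => m _; rewrite mcoeffB mulrBr mulrBl. Qed.

Lemma inner_subr k F G1 G2 : inner k F (G1 - G2) = inner k F G1 - inner k F G2.
Proof. by rewrite /inner -sumrB; apply: eq_bigr => m _; rewrite mcoeffB rmorphB mulrBr. Qed.

Lemma inner_mulXB k F G a b :
  inner k.+1 F (G * ('X_a - 'X_b)) = inner k (F^`M(a) - F^`M(b)) G.
Proof. by rewrite mulrBr inner_subr !inner_mulX inner_subl. Qed.

End Fischer.

Section ProductRule.

Variables (R : comNzRingType) (n : nat).
Implicit Types (a i : 'I_n) (L : {mpoly R[n]}).

Lemma mderiv_bigprod a (T : eqType) (r : seq T) (g : T -> {mpoly R[n]}) :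
  uniq r ->
  (\prod_(p <- r) g p)^`M(a) = \sum_(q <- r) (g q)^`M(a) * \prod_(p <- r | p != q) g p.
Proof.
elim: r => [|x r IH] /=; first by rewrite !big_nil -mpolyC1 mderivC.
case/andP => xr ur; rewrite !big_cons mderivM IH // eqxx /= mulr_sumr.
congr (_ + _).
  congr (_ * _); rewrite big_seq_cond [RHS]big_seq_cond; apply: eq_bigl => p.
  rewrite andbT; case: (boolP (p \in r)) => //= pr; apply/esym/eqP => px.
  by rewrite -px pr in xr.
apply: eq_big_seq => q qr; rewrite big_cons.
have -> : x != q by apply/eqP => e; rewrite e qr in xr.
by rewrite mulrCA.
Qed.

Lemma mderiv_exp a L k : (L ^+ k)^`M(a) = L^`M(a) * L ^+ k.-1 *+ k.
Proof.
elim: k => [|k IH]; first by rewrite expr0 mulr0n -mpolyC1 mderivC.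
rewrite exprS mderivM IH; case: k {IH} => [|k] /=.
  by rewrite mulr0n mulr0 addr0.
by rewrite mulrnAr mulrCA -exprS -mulrS.
Qed.

Lemma mderiv_var a i : ('X_i : {mpoly R[n]})^`M(a) = ((i == a)%:R)%:MP.
Proof.
rewrite mderivX mnm1E; case: eqP => [->|_].
  by rewrite -{1}[U_(a)%MM]add0m addmK mpolyX0 scale1r mpolyC1.
by rewrite scale0r mpolyC0.
Qed.

End ProductRule.

Section SpaceW.

Variables (C : numClosedFieldType) (n : nat).
Variables (E : {set 'I_n * 'I_n}) (K : 'I_n * 'I_n -> nat).
Implicit Types (F G : {mpoly C[n]}) (a : 'I_n).

Definition decr_at (K' : 'I_n * 'I_n -> nat) (q : 'I_n * 'I_n) : 'I_n * 'I_n -> nat :=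
  fun p => if p == q then (K' q).-1 else K' p.

Lemma mderiv_HE a (K' : 'I_n * 'I_n -> nat) :
  (HE C E K')^`M(a) =
  \sum_(q in E) ((((q.1 == a)%:R + (q.2 == a)%:R) *+ K' q) *: HE C E (decr_at K' q)).
Proof.
rewrite /HE -big_enum /= mderiv_bigprod ?enum_uniq // big_enum /=.
apply: eq_bigr => q qE.
rewrite big_enum_cond /= [in RHS](bigD1 q) //= mderiv_exp mderivD !mderiv_var.
rewrite /decr_at eqxx.
have -> : \prod_(p in E | p != q) ('X_p.1 + 'X_p.2) ^+ (if p == q then (K' q).-1 else K' p)
   = \prod_(p in E | p != q) (('X_p.1 + 'X_p.2) ^+ K' p : {mpoly C[n]}).
  by apply: eq_bigr => p /andP[_ /negbTE ->].
by rewrite -raddfD /= mulrnAl -mulrA mul_mpolyC scalerMnl.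
Qed.

Lemma inW0 m : inW K E m (0 : {mpoly C[n]}).
Proof. by exists 0%N, (fun _ => 0), (fun _ _ => 0%N); split; [case | rewrite big_ord0]. Qed.

Lemma inW_HE m (K' : 'I_n * 'I_n -> nat) : admissible E K m K' -> inW K E m (HE C E K').
Proof. by exists 1%N, (fun _ => 1), (fun _ => K'); rewrite big_ord1 scale1r. Qed.

Lemma inW_scale m c F : inW K E m F -> inW K E m (c *: F).
Proof.
case=> N [d [k [adm ->]]]; exists N, (fun t => c * d t), k; split => //.
by rewrite scaler_sumr; apply: eq_bigr => t _; rewrite scalerA.
Qed.

Lemma inW_add m F G : inW K E m F -> inW K E m G -> inW K E m (F + G).
Proof.
case=> [N1 [c1 [k1 [adm1 ->]]]] [N2 [c2 [k2 [adm2 ->]]]].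
exists (N1 + N2)%N, (fun t => match split t with inl i => c1 i | inr j => c2 j end),
  (fun t => match split t with inl i => k1 i | inr j => k2 j end); split.
  by move=> t; case: (split t).
rewrite big_split_ord /=; congr (_ + _); apply: eq_bigr => i _.
  by rewrite (unsplitK (inl i) : split (lshift N2 i) = inl i).
by rewrite (unsplitK (inr i) : split (rshift N1 i) = inr i).
Qed.

Lemma inW_sum m (I : Type) (r : seq I) (P : pred I) (f : I -> {mpoly C[n]}) :
  (forall i, P i -> inW K E m (f i)) -> inW K E m (\sum_(i <- r | P i) f i).
Proof. by move=> fW; apply: big_ind => //; [apply: inW0 | apply: inW_add]. Qed.

Lemma admissible_decr m (K' : 'I_n * 'I_n -> nat) q :
  admissible E K m.+1 K' -> q \in E -> (0 < K' q)%N ->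
  admissible E K m (decr_at K' q).
Proof.
case=> sumK' leK' qE K'q; split.
  move: sumK'; rewrite (bigD1 q) //= [in X in _ -> X](bigD1 q) //= /decr_at eqxx.
  have -> : (\sum_(p in E | p != q) (if p == q then (K' q).-1 else K' p))%N
     = (\sum_(p in E | p != q) K' p)%N.
    by apply: eq_bigr => p /andP[_ /negbTE ->].
  by rewrite -[in X in X -> _](prednK K'q) addSn => -[].
move=> p pE; rewrite /decr_at; case: eqP => [->|_]; last exact: leK'.
exact: leq_trans (leq_pred _) (leK' q qE).
Qed.

Lemma inW_deriv_HE m a (K' : 'I_n * 'I_n -> nat) : admissible E K m.+1 K' -> inW K E m ((HE C E K')^`M(a)).
Proof.
move=> adm; rewrite mderiv_HE; apply: inW_sum => q qE.
have [->|K'q] := posnP (K' q); first by rewrite mulr0n scale0r; apply: inW0.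
by apply/inW_scale/inW_HE/admissible_decr.
Qed.

Lemma inW_deriv m a F : inW K E m.+1 F -> inW K E m (F^`M(a)).
Proof.
case=> N [c [k [adm ->]]]; rewrite raddf_sum /=; apply: inW_sum => t _.
by rewrite mderivZ; apply/inW_scale/inW_deriv_HE.
Qed.

Lemma inW_peel G (s : seq ('I_n * 'I_n)) m F :
  inW K E (m + size s) F ->
  exists2 F', inW K E m F' &
    inner m F' G = inner (m + size s) F (G * \prod_(p <- s) ('X_p.1 - 'X_p.2)).
Proof.
elim: s m F => [|p s IH] m F; first by rewrite addn0 big_nil mulr1; exists F.
rewrite /= addnS big_cons mulrCA [_ * (G * _)]mulrC inner_mulXB => FW.
apply: IH; apply: inW_add; first exact: inW_deriv.
by rewrite -scaleN1r; apply/inW_scale/inW_deriv.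
Qed.

End SpaceW.

Theorem lemma6p1 (C : numClosedFieldType) (n : nat)
  (E E' : {set 'I_n * 'I_n}) (K : 'I_n * 'I_n -> nat) :
  two_subsets E' -> E \subset E' ->
  (exists F : {mpoly C[n]}, inW K E #|E'| F /\ inner #|E'| F (QE C E') != 0) ->
  exists F' : {mpoly C[n]}, inW K E #|E| F' /\ inner #|E| F' (QE C E) != 0.
Proof.
move=> _ sEE' [F [FW F_Q]].
pose s := enum (E' :\: E).
have QE_split : QE C E' = QE C E * \prod_(p <- s) ('X_p.1 - 'X_p.2).
  by rewrite /QE big_enum (big_setID E) /= (setIidPr sEE').
have card_split : #|E'| = (#|E| + size s)%N.
  by rewrite -cardE -(cardsID E E') (setIidPr sEE').
rewrite card_split in FW F_Q; rewrite QE_split in F_Q.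
have [F' F'W F'_Q] := inW_peel (QE C E) FW.
by exists F'; rewrite F'_Q.
Qed.
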